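(* Let $\mathcal{D}$ be a DAG on vertex set $[p]$, let $\mathcal{V} \subseteq [p]$, and let $k \in \mathcal{V}$. Then the fill edge set of $k$ over $\mathcal{V}$ consists exactly of the pairs of neighbors of $k$ in $\mathcal{M}_{\mathcal{V}}(\mathcal{D})$ that are not adjacent to each other in $\mathcal{M}_{\mathcal{V}}(\mathcal{D})$: \[ \mathcal{F}_{\mathcal{D}}(\mathcal{V}, k) = \{\, i - j \;:\; i \neq j,\ i, j \in \mathrm{nbr}_{\mathcal{M}_{\mathcal{V}}(\mathcal{D})}(k),\ i \not\sim_{\mathcal{M}_{\mathcal{V}}(\mathcal{D})} j \,\}. \]
   Context: For a DAG $\mathcal{D}$ on $[p]$ and $i, j \in [p]$, $S \subseteq [p]\setminus\{i,j\}$, write $i \perp\!\!\!\perp_{\mathcal{D}} j \mid S$ if $i$ and $j$ are d-separated given $S$ in $\mathcal{D}$, and $i \not\perp\!\!\!\perp_{\mathcal{D}} j \mid S$ if they are d-connected. For $\mathcal{V} \subseteq [p]$, the moral subgraph $\mathcal{M}_{\mathcal{V}}(\mathcal{D})$ is the undirected graph with vertex set $\mathcal{V}$ and edge set $\{ i - j : i \neq j \in \mathcal{V},\ i \not\perp\!\!\!\perp_{\mathcal{D}} j \mid \mathcal{V}\setminus\{i,j\}\}$. For an undirected graph $\mathcal{G}$ and vertex set $W$, $\mathcal{G}[W]$ is the induced subgraph on $W$; $\mathrm{nbr}_{\mathcal{G}}(k)$ is the set of neighbors of $k$ in $\mathcal{G}$, and $i \sim_{\mathcal{G}} j$ means $i,j$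 are adjacent in $\mathcal{G}$. Write $\mathcal{V}\setminus k := \mathcal{V}\setminus\{k\}$. The fill edge set of $k$ over $\mathcal{V}$ is the set of edges $\mathcal{F}_{\mathcal{D}}(\mathcal{V}, k) = \mathcal{M}_{\mathcal{V}\setminus k}(\mathcal{D}) \setminus \mathcal{M}_{\mathcal{V}}(\mathcal{D})[\mathcal{V}\setminus k]$ (edges present in the moral subgraph on $\mathcal{V}\setminus k$ but absent from the induced subgraph of $\mathcal{M}_{\mathcal{V}}(\mathcal{D})$ on $\mathcal{V}\setminus k$). *)

(* Directed graphs on the vertex set [p] = 'I_p, given by an
   edge relation  e : rel 'I_p  (e a b  means  a -> b). *)
From mathcomp Require Import all_boot.
Set Implicit Arguments. Unset Strict Implicit. Unset Printing Implicit Defensive.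

Section Graphs.
Variable T : finType.
Variable e : rel T.

Definition acyclic : Prop := forall x : T, ~~ [exists y, e x y && connect e y x].

Definition skel : rel T := fun a b => e a b || e b a.

Definition collider (a b c : T) : bool := e a b && e c b.

Definition triple_open (S : {set T}) (a b c : T) : bool :=
  if collider a b c then [exists d in S, connect e b d] else b \notin S.

Fixpoint triples_open (S : {set T}) (a b : T) (s : seq T) : bool :=
  match s with
  | [::] => true
  | c :: s' => triple_open S a b c && triples_open S b c s'
  end.

(* the path  i :: s  (a simple path in the skeleton from i to j) is active given S *)
Definition active_path (S : {set T}) (i j : T) (s : seq T) : bool :=
  [&& path skel i s, last i s == j, uniq (i :: s) &
      match s with [::] => true | b :: s' => triples_open S i b s' end].

Definition dconnected (S : {set T}) (i j : T) : Prop :=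
  exists s : seq T, active_path S i j s.

Definition dseparated (S : {set T}) (i j : T) : Prop := ~ dconnected S i j.

(* Moral subgraph M_V(D): an undirected graph on V, given by its (symmetric)
   adjacency relation; i - j is an edge iff i <> j in V and i, j are
   d-connected given V \ {i,j}. *)
Definition moral (V : {set T}) (i j : T) : Prop :=
  [/\ i \in V, j \in V, i != j & dconnected (V :\ i :\ j) i j].

Definition induced (G : T -> T -> Prop) (W : {set T}) (i j : T) : Prop :=
  [/\ i \in W, j \in W & G i j].

Definition nbr (G : T -> T -> Prop) (k : T) (i : T) : Prop := G k i.

Definition fill (V : {set T}) (k : T) (i j : T) : Prop :=
  moral (V :\ k) i j /\ ~ induced (moral V) (V :\ k) i j.

End Graphs.

(* Work with walks (vertex sequences along skeleton edges, with
   repetitions allowed) all of whose consecutive triples are open given the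
   conditioning set.  Two facts make walks as good as active paths:
   - open walks are closed under reversal, under taking sub-walks, and under
     gluing at a vertex through an open triple;
   - in a DAG every open walk shortens to an open simple path with the same
     endpoints: cutting out a loop v ... v keeps the triple around v open,
     since a loop entered by an edge into v cannot be a directed cycle.
   Writing A = V \ {k, i, j}, the moral edges among k, i, j are d-connections
   given A plus the third vertex.  A fill edge i - j is an active path given
   A which is not active given k |: A, so it runs through k, and its halves
   give the moral edges k - i and k - j.  Conversely, an open walk given
   x |: A either stays open given A or can be rerouted down to x from its
   first collider; gluing the two witnesses of k - i and k - j at k yields a
   walk open given A unless k is a collider, and then M_V(D) has i - j. *)
From mathcomp Require Import all_boot.
From mathcomp Require Import zify.
Set Implicit Arguments. Unset Strict Implicit. Unset Printing Implicit Defensive.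

Section Walks.
Variable T : finType.
Variable e : rel T.

Definition anc (S : {set T}) (b : T) : bool := [exists d in S, connect e b d].

Definition open_walk (S : {set T}) (w : seq T) : bool :=
  if w is a :: b :: s then triples_open e S a b s else true.

Lemma triple_openE S a b c :
  triple_open e S a b c = if collider e a b c then anc S b else b \notin S.
Proof. by []. Qed.

Lemma open_walk3 S a b c s :
  open_walk S [:: a, b, c & s] = triple_open e S a b c && open_walk S [:: b, c & s].
Proof. by []. Qed.

Lemma open_walk_cons S a l :
  open_walk S (a :: l) =
  (if l is b :: c :: _ then triple_open e S a b c else true) && open_walk S l.
Proof. by case: l => [|b [|c l]]. Qed.

Lemma open_walk_suffix S p l : open_walk S (p ++ l) -> open_walk S l.
Proof. by elim: p => // a p IH; rewrite cat_cons open_walk_cons => /andP[_ /IH]. Qed.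

Lemma open_walk_prefix S p l : open_walk S (p ++ l) -> open_walk S p.
Proof.
elim: p => // a p IH; rewrite cat_cons !open_walk_cons => /andP[t /IH ->].
by move: t; case: p {IH} => [|b [|c p]] //= ->; rewrite ?andbT.
Qed.

Lemma open_walk_cat S p x y q :
  open_walk S (p ++ [:: x, y & q]) = open_walk S (p ++ [:: x; y]) && open_walk S [:: x, y & q].
Proof.
elim: p => [|a p IH] //.
rewrite !cat_cons (open_walk_cons S a (p ++ _)) (open_walk_cons S a (p ++ [:: x; y])) IH andbA.
by congr (_ && _ && _); case: p {IH} => [|b [|c p]].
Qed.

Lemma triple_open_sym S a b c : triple_open e S a b c = triple_open e S c b a.
Proof. by rewrite /triple_open /collider andbC. Qed.

Lemma open_walk_rev S w : open_walk S (rev w) = open_walk S w.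
Proof.
elim: w => [|a [|b [|c l]] IH] //.
have revE x y (s : seq T) : rev [:: x, y & s] = rev s ++ [:: y; x].
  by rewrite !rev_cons -!cats1 -catA.
rewrite rev_cons revE -cats1 -catA /= open_walk_cat -revE IH open_walk3 /= andbT andbC.
by rewrite triple_open_sym.
Qed.

Lemma anc_connect S x y : connect e x y -> anc S y -> anc S x.
Proof.
move=> cxy /existsP[d /andP[dS cyd]]; apply/existsP; exists d.
by rewrite dS (connect_trans cxy cyd).
Qed.

Lemma anc_setU1 (A : {set T}) x z : anc (x |: A) z -> ~~ anc A z -> connect e z x.
Proof.
move=> /existsP[d /andP[]]; rewrite in_setU1 => /orP[/eqP-> //|dA] czd.
by case/negP; apply/existsP; exists d; rewrite dA.
Qed.

Lemma open_walk_setU1 S x y l :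
  x \notin l -> open_walk S (y :: l) -> open_walk (x |: S) (y :: l).
Proof.
elim: l y => [|z [|c l] IH] y //; rewrite in_cons negb_or => /andP[xz xl].
rewrite !open_walk3 => /andP[t w]; rewrite (IH z xl w) andbT.
move: t; rewrite !triple_openE in_setU1 negb_or eq_sym xz.
case: ifP => // _ /existsP[d /andP[dS czd]].
by apply/existsP; exists d; rewrite in_setU1 dS orbT.
Qed.

Lemma skel_sym : symmetric (skel e).
Proof. by move=> a b; rewrite /skel orbC. Qed.

Lemma sorted_skel_rev s : sorted (skel e) (rev s) = sorted (skel e) s.
Proof. by rewrite rev_sorted; apply: eq_sorted => a b; rewrite skel_sym. Qed.

Lemma rev_cons_last (x : T) s : rev (x :: s) = last x s :: rev (belast x s).
Proof. by rewrite lastI rev_rcons. Qed.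

Lemma dconnectedP S i j : dconnected e S i j <->
  exists s, [/\ path (skel e) i s, open_walk S (i :: s), uniq (i :: s) & last i s = j].
Proof.
have walkE s : open_walk S (i :: s) = if s is b :: s' then triples_open e S i b s' else true.
  by case: s.
split=> [[s /and4P[ps /eqP ls us ws]]|[s [ps ws us ls]]].
  by exists s; rewrite walkE.
by exists s; apply/and4P; rewrite -walkE ls.
Qed.

Lemma dconnected_sym S i j : dconnected e S i j -> dconnected e S j i.
Proof.
case/dconnectedP => s [ps ws us ls]; apply/dconnectedP.
have E : rev (i :: s) = j :: rev (belast i s) by rewrite rev_cons_last ls.
exists (rev (belast i s)); rewrite -E open_walk_rev rev_uniq; split => //.
- by rewrite -[path _ _ _]/(sorted (skel e) (j :: _)) -E sorted_skel_rev.
- by rewrite -[last j _]/(last i (j :: _)) -E rev_cons last_rcons.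
Qed.

Lemma not_uniq_split (s : seq T) :
  ~~ uniq s -> exists q v r t, s = q ++ v :: r ++ v :: t.
Proof.
elim: s => [|a s IH] //=; rewrite negb_and negbK => /orP[/splitPr[p q] | /IH[q [v [r [t ->]]]]].
  by exists [::], a, p, q.
by exists (a :: q), v, r, t.
Qed.

(* Along an open walk entering y through an edge x -> y, either a collider,
   hence an ancestor of S, is met, or the walk continues as a directed path. *)
Lemma enter_directed S ys x y : e x y -> path (skel e) y ys ->
  open_walk S [:: x, y & ys] -> anc S y \/ path e y ys.
Proof.
elim: ys x y => [|z ys IH] x y exy; first by right.
move=> /= /andP[syz pys] /andP[t w]; move: t; rewrite triple_openE /collider exy /=.
case: ifP => [_ Ay | ezy _]; first by left.
have eyz : e y z by move: syz; rewrite /skel ezy orbF.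
case: (IH y z eyz pys w) => [Az | pz]; last by right; rewrite /= eyz.
by left; apply: anc_connect Az; apply: connect1.
Qed.

Hypothesis acyc : acyclic e.

Lemma no_cycle x y : e x y -> connect e y x -> False.
Proof.
move=> exy cyx; move/negP: (acyc x); apply; apply/existsP; exists y.
by rewrite exy cyx.
Qed.

(* An open walk a -> v ... v closing a loop at v makes v an ancestor of S:
   otherwise the loop would be a directed cycle. *)
Lemma loop_anc S a v l : e a v -> path (skel e) v l -> open_walk S [:: a, v & l] ->
  last v l = v -> l != [::] -> anc S v.
Proof.
case: l => [|b ys] // eav /= /andP[svb pys] /andP[t w] lst _.
move: t; rewrite triple_openE /collider eav /=; case: ifP => [_ -> // | ebv _].
have evb : e v b by move: svb; rewrite /skel ebv orbF.
case: (enter_directed evb pys w) => [Ab | pb]; first by apply: anc_connect Ab; apply: connect1.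
by case: (no_cycle evb); apply/connectP; exists ys.
Qed.

Lemma loop_triple S a v d r : path (skel e) v (rcons r v) ->
  open_walk S ([:: a, v & r] ++ [:: v; d]) -> triple_open e S a v d.
Proof.
move=> pl W; rewrite triple_openE /collider; case: ifP => [/andP[eav _] | /negbT].
  apply: (loop_anc eav pl); last by case: r {pl W}.
    by apply: (@open_walk_prefix S _ [:: d]); rewrite /= cat_rcons.
  by rewrite last_rcons.
case/nandP => [nav | ndv].
  by case: r {pl} W => [|c r]; rewrite /= triple_openE /collider (negbTE nav) => /andP[].
have E : [:: a, v & r] ++ [:: v; d] = (a :: belast v r) ++ [:: last v r; v; d].
  by rewrite [v :: r]lastI /= cat_rcons.
move: W; rewrite E => /open_walk_suffix /andP[].
by rewrite triple_openE /collider (negbTE ndv) andbF.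
Qed.

Lemma open_walk_drop_loop S q v r t : path (skel e) v (rcons r v) ->
  open_walk S (q ++ v :: r ++ v :: t) -> open_walk S (q ++ v :: t).
Proof.
move=> pl; case: t => [|d t].
  by rewrite (catA q [:: v]) => W; exact: (@open_walk_prefix S (q ++ [:: v]) _ W).
case/lastP: q => [|q a] W.
  by rewrite cat0s; exact: (@open_walk_suffix S (v :: r) _ W).
rewrite cat_rcons open_walk_cat; rewrite cat_rcons open_walk_cat in W.
case/andP: W => -> W.
have E : [:: a, v & r ++ [:: v, d & t]] = [:: a, v & r] ++ [:: v, d & t] by [].
rewrite E open_walk_cat in W; case/andP: W => W1 W2.
by rewrite open_walk3 (loop_triple pl W1) W2.
Qed.

Lemma open_walk_shorten S x w : sorted (skel e) w -> open_walk S w ->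
  exists w', [/\ sorted (skel e) w', open_walk S w', uniq w',
                head x w' = head x w & last x w' = last x w].
Proof.
have [n] := ubnP (size w); elim: n => // n IH in w *; move=> /ltnSE sz sw ow.
case U: (uniq w); first by exists w.
case/not_uniq_split: (negbT U) => q [v [r [t Ew]]]; subst w.
move: sw; rewrite sorted_cat_cons cat_path => /and3P[sq pr prt].
have [pl pt] : path (skel e) v (rcons r v) /\ path (skel e) v t.
  by case/andP: prt => svr pt; rewrite rcons_path pr svr.
have [|||w' [sw' ow' uw' hw' lw']] := IH (q ++ v :: t).
- by move: sz; rewrite !size_cat /= size_cat /=; lia.
- by rewrite sorted_cat_cons sq.
- exact: open_walk_drop_loop ow.
exists w'; split => //; first by rewrite hw'; case: (q).
by rewrite lw' !last_cat /= last_cat.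
Qed.

Lemma dconnected_of_walk S i s : path (skel e) i s -> open_walk S (i :: s) ->
  dconnected e S i (last i s).
Proof.
move=> ps ws; have [[|y s'] [sw' ow' uw' /= hw' <-]] := @open_walk_shorten S i (i :: s) ps ws.
  by apply/dconnectedP; exists [::].
by subst y; apply/dconnectedP; exists s'.
Qed.

(* A walk entering y and then following a directed path from y that avoids
   every vertex of A is open given A: all its inner triples are chains. *)
Lemma directed_open (A : {set T}) x y t : e x y -> path e y t ->
  (forall u, connect e y u -> u \notin A) -> open_walk A [:: x, y & t].
Proof.
elim: t x y => [|z t IH] x y exy //= /andP[eyz pt] offA.
apply/andP; split.
  rewrite triple_openE /collider exy /=.
  case: ifP => [ezy | _]; last exact: offA (connect0 _ _).
  by case: (no_cycle eyz); apply: connect1.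
apply: (IH y z eyz pt) => u czu; apply: offA.
exact: connect_trans (connect1 eyz) czu.
Qed.

(* Dropping x from the conditioning set: a walk open given x |: A either
   stays open given A, or its first offending vertex is a collider that is
   an ancestor of x, and the walk can be rerouted down to x. *)
Lemma reroute_collider (A : {set T}) x : forall r y z, path (skel e) y (z :: r) ->
  open_walk (x |: A) [:: y, z & r] ->
  open_walk A [:: y, z & r] \/
  exists t, [/\ path (skel e) y (z :: t), open_walk A [:: y, z & t] & last z t = x].
Proof.
elim=> [|w r IH] y z ps ws; first by left.
case/andP: ps => syz pz; move: ws; rewrite open_walk3 => /andP[tx wx].
case TA: (triple_open e A y z w).
  case: (IH z w pz wx) => [W | [t [pt wt lt]]]; first by left; rewrite open_walk3 TA.
  by right; exists (w :: t); rewrite /= syz /= TA.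
move: TA tx; rewrite !triple_openE; case: ifP => [col nAz Axz | _]; last first.
  by rewrite in_setU1 negb_or => -> /andP[].
have eyz : e y z by case/andP: col.
have /connectP[t pt lt] := anc_setU1 Axz (negbT nAz).
right; exists t; split => //.
  by rewrite /= syz; apply: sub_path pt => a b eab; rewrite /skel eab.
apply: directed_open => // u czu; apply: contraFN nAz => uA.
by apply/existsP; exists u; rewrite uA.
Qed.

Lemma open_or_reach (A : {set T}) x k s : path (skel e) k s -> open_walk (x |: A) (k :: s) ->
  open_walk A (k :: s) \/ dconnected e A (last k s) x.
Proof.
move=> ps ws; have E := rev_cons_last k s.
have pr : path (skel e) (last k s) (rev (belast k s)).
  by rewrite -[path _ _ _]/(sorted (skel e) (_ :: _)) -E sorted_skel_rev.
have wr : open_walk (x |: A) (last k s :: rev (belast k s)) by rewrite -E open_walk_rev.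
rewrite -open_walk_rev E; move: pr wr; case: (rev (belast k s)) => [|z r] pr wr.
  by left.
case: (reroute_collider pr wr) => [W | [t [pt wt <-]]]; first by left.
by right; exact: (dconnected_of_walk pt wt).
Qed.

Lemma dconnected_glue S k b d s1 s2 :
  path (skel e) k (b :: s1) -> path (skel e) k (d :: s2) ->
  open_walk S [:: k, b & s1] -> open_walk S [:: k, d & s2] -> triple_open e S b k d ->
  dconnected e S (last b s1) (last d s2).
Proof.
move=> p1 p2 w1 w2 tb.
have E : last b s1 :: (rev (belast b s1) ++ [:: k, d & s2]) = rev s1 ++ [:: b, k, d & s2].
  by rewrite -cat_cons -rev_cons_last rev_cons cat_rcons.
have -> : last d s2 = last (last b s1) (rev (belast b s1) ++ [:: k, d & s2]).
  by rewrite last_cat.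
apply: dconnected_of_walk.
  rewrite -[path _ _ _]/(sorted (skel e) (_ :: _)) E sorted_cat_cons -rev_cons.
  rewrite sorted_skel_rev; case/andP: p1 => skb p1; apply/andP; split=> //.
  by rewrite -[path _ b _]/(skel e b k && path (skel e) k (d :: s2)) skel_sym skb.
rewrite E open_walk_cat open_walk3 tb w2 !andbT.
have -> : rev s1 ++ [:: b; k] = rev [:: k, b & s1] by rewrite !rev_cons -!cats1 -catA.
by rewrite open_walk_rev.
Qed.

Lemma moral_sets (V : {set T}) k i j : k \in V -> i \in V -> j \in V ->
  i != j -> i != k -> j != k ->
  [/\ V :\ k :\ i = j |: (V :\ k :\ i :\ j), V :\ k :\ j = i |: (V :\ k :\ i :\ j)
    & V :\ i :\ j = k |: (V :\ k :\ i :\ j)].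
Proof.
move=> kV iV jV nij nik njk.
have swap (W : {set T}) x y : W :\ x :\ y = W :\ y :\ x.
  by apply/setP=> z; rewrite !inE andbCA.
split; first by rewrite setD1K // !in_setD1 (eq_sym j i) nij njk jV.
  by rewrite (swap (V :\ k) i j) setD1K // !in_setD1 nij nik iV.
rewrite (swap V k i) (swap (V :\ i) k j) setD1K //.
by rewrite !in_setD1 (eq_sym k j) njk (eq_sym k i) nik kV.
Qed.

(* A fill edge i - j joins two neighbours of k that are not adjacent in
   M_V(D): an active path given V \ {k, i, j} must pass through k, and its two
   halves witness the moral edges k - i and k - j. *)
Lemma fill_nbr (V : {set T}) k i j : k \in V -> fill e V k i j ->
  [/\ i != j, moral e V k i, moral e V k j & ~ moral e V i j].
Proof.
move=> kV [[iVk jVk nij D] nI].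
have nM : ~ moral e V i j by move=> M; apply: nI; split.
move: iVk jVk; rewrite !in_setD1 => /andP[nik iV] /andP[njk jV].
have [E1 E2 E3] := moral_sets kV iV jV nij nik njk.
case/dconnectedP: D => s [ps ws us ls].
have ks : k \in s.
  apply/negPn/negP => ks; apply: nM; split => //; rewrite E3.
  by have := dconnected_of_walk ps (open_walk_setU1 ks ws); rewrite ls.
case/splitPr: ks ps ws us ls => p q ps ws us ls.
have lq : last k q = j by rewrite -ls last_cat.
move: us; rewrite -cat_cons cat_uniq => /and3P[_ disj _].
have iq : i \notin q.
  by apply/negP => iq; case/hasP: disj; exists i; rewrite !inE ?iq ?eqxx ?orbT.
have jp : j \notin rcons p k.
  rewrite mem_rcons in_cons negb_or njk /=; apply/negP => jp.
  by case/hasP: disj; exists j; [rewrite -lq mem_last | rewrite inE jp orbT].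
move: ps; rewrite cat_path => /andP[pp pq].
split => //; split => //; rewrite 1?eq_sym //.
  have pk : path (skel e) i (rcons p k) by rewrite rcons_path pp; case/andP: pq.
  have wk : open_walk (V :\ k :\ i :\ j) (i :: rcons p k).
    by apply: (@open_walk_prefix _ _ q); rewrite /= cat_rcons.
  rewrite E1; apply: dconnected_sym.
  by have := dconnected_of_walk pk (open_walk_setU1 jp wk); rewrite last_rcons.
have pq' : path (skel e) k q by case/andP: pq.
have wq : open_walk (V :\ k :\ i :\ j) (k :: q) by apply: (@open_walk_suffix _ (i :: p)).
rewrite E2; have := dconnected_of_walk pq' (open_walk_setU1 iq wq).
by rewrite lq.
Qed.

(* Conversely, two non-adjacent neighbours i, j of k are d-connected given
   V \ {k, i, j}: reroute the witnesses of k - i and k - j so that they are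
   open given V \ {k, i, j} and glue them at k; if the gluing triple were
   closed, k would be a collider and i, j would be adjacent in M_V(D). *)
Lemma nbr_fill (V : {set T}) k i j : moral e V k i -> moral e V k j -> ~ moral e V i j ->
  i != j -> dconnected e (V :\ k :\ i :\ j) i j.
Proof.
move=> [kV iV nki D1] [_ jV nkj D2] nM nij.
have nik : i != k by rewrite eq_sym.
have njk : j != k by rewrite eq_sym.
have [E1 E2 E3] := moral_sets kV iV jV nij nik njk.
set A := V :\ k :\ i :\ j in E1 E2 E3 *.
rewrite E1 in D1; rewrite E2 in D2.
case/dconnectedP: D1 => [[|b s1] [p1 w1 u1 l1]]; first by rewrite -l1 eqxx in nki.
case/dconnectedP: D2 => [[|d s2] [p2 w2 u2 l2]]; first by rewrite -l2 eqxx in nkj.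
case: (open_or_reach p1 w1) => [W1 | ]; last by rewrite l1.
case: (open_or_reach p2 w2) => [W2 | ]; last by rewrite l2; apply: dconnected_sym.
case Tk: (triple_open e A b k d).
  by rewrite -l1 -l2; exact: (dconnected_glue p1 p2 W1 W2 Tk).
case: nM; split => //; rewrite E3 -l1 -l2.
have kA : k \notin A by rewrite !inE eqxx !andbF.
apply: (dconnected_glue p1 p2).
- by apply: open_walk_setU1 W1; case/andP: u1.
- by apply: open_walk_setU1 W2; case/andP: u2.
move: Tk; rewrite !triple_openE; case: ifP => _; last by rewrite kA.
by move=> _; apply/existsP; exists k; rewrite setU11 connect0.
Qed.

End Walks.

Theorem proposition1 (p : nat) (e : rel 'I_p) (V : {set 'I_p}) (k : 'I_p) :
  acyclic e -> k \in V ->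
  forall i j : 'I_p,
    fill e V k i j <->
    [/\ i != j, nbr (moral e V) k i, nbr (moral e V) k j & ~ moral e V i j].
Proof.
move=> acyc kV i j; split; first exact: fill_nbr.
move=> [nij Mki Mkj nM]; split; last by case.
have [_ iV nki _] := Mki; have [_ jV nkj _] := Mkj.
split=> //; first by rewrite in_setD1 iV eq_sym nki.
  by rewrite in_setD1 jV eq_sym nkj.
exact: (nbr_fill acyc Mki Mkj nM nij).
Qed.
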